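(* If $G=\prod_{i=1}^tK[a_i,b_i]$ with $2\le b_1\le\cdots\le b_t$, then $$\mathrm{IR}(G)\le\frac{b_1}{2b_1-1}\prod_{i=1}^ta_ib_i.$$
   Context: $K[a,b]$ is the balanced complete $b$-partite graph with $b$ parts of size $a$ (vertices adjacent iff in different parts); $\prod$ denotes the direct product of graphs ($(g_1,h_1)\sim(g_2,h_2)$ iff $g_1\sim g_2$ and $h_1\sim h_2$). A set $S$ is irredundant if every $v\in S$ has a private neighbor, i.e. a vertex in $N[v]\setminus N[S\setminus\{v\}]$ (closed neighborhoods). $\mathrm{IR}(G)$ is the maximum size of an irredundant set. *)

From HB Require Import structures.
From mathcomp Require Import all_boot all_order all_algebra.
Set Implicit Arguments. Unset Strict Implicit. Unset Printing Implicit Defensive.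

Definition cnbr (V : finType) (e : rel V) (v u : V) : bool := (u == v) || e v u.

Definition private_nbr (V : finType) (e : rel V) (S : {set V}) (v u : V) : bool :=
  cnbr e v u && [forall w in S :\ v, ~~ cnbr e w u].

Definition irredundant (V : finType) (e : rel V) (S : {set V}) : bool :=
  [forall v in S, exists u, private_nbr e S v u].

Definition IR (V : finType) (e : rel V) : nat :=
  \max_(S : {set V} | irredundant e S) #|S|.

(* Vertices of K[a,b]: pairs (part, index in part), part : 'I_b, index : 'I_a;
   adjacent iff in different parts. *)
Definition prodK_vertex (t : nat) (a b : nat -> nat) : finType :=
  {dffun forall i : 'I_t, ('I_(b i) * 'I_(a i))%type}.

Definition prodK_adj (t : nat) (a b : nat -> nat) : rel (prodK_vertex t a b) :=
  fun g h => [forall i : 'I_t, (g i).1 != (h i).1].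

(* In fact IR(G) <= |V|/2, and b/(2b-1) >= 1/2.  In a graph with an injection
   [s] sending every vertex to a neighbour (for the product: move every
   coordinate to the next part), an irredundant set S yields |S| further
   vertices outside S: a private neighbour f v for each v in S that is not its
   own private neighbour, and s v for each v that is.  Privacy of the
   neighbours makes S, these f v and these s v pairwise distinct. *)
From mathcomp Require Import all_boot all_order all_algebra.
From mathcomp Require Import zify.
Import GRing.Theory Num.Theory.

Set Implicit Arguments.
Unset Strict Implicit.
Unset Printing Implicit Defensive.

Lemma cardsU_disjoint (T : finType) (A B : {set T}) :
  [disjoint A & B] -> #|A :|: B| = #|A| + #|B|.
Proof. by move=> AB; apply/eqP; rewrite (leq_card_setU A B).2. Qed.

Section IrredundantHalf.
Variables (V : finType) (e : rel V) (s : V -> V).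
Hypothesis e_sym : symmetric e.
Hypothesis e_irr : irreflexive e.
Hypothesis s_inj : injective s.
Hypothesis s_adj : forall v, e v (s v).

Lemma cnbr_refl v : cnbr e v v.
Proof. by rewrite /cnbr eqxx. Qed.

Lemma private_nbr_other {S : {set V}} {v u w : V} :
  private_nbr e S v u -> w \in S -> w != v -> ~~ cnbr e w u.
Proof. by case/andP=> _ /forallP /(_ w); rewrite !inE => + wS wv; rewrite wv wS. Qed.

Section Witnesses.
Variables (S : {set V}) (f : V -> V).
Hypothesis f_priv : {in S, forall v, private_nbr e S v (f v)}.

Let S1 := [set v in S | private_nbr e S v v].
Let S2 := S :\: S1.

Lemma f_neq_S2 {v : V} : v \in S2 -> f v != v.
Proof.
rewrite !inE => /andP[/negP vS1 vS]; apply/eqP => fv.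
by apply: vS1; rewrite vS -{2}fv f_priv.
Qed.

Lemma f_notin_S {v : V} : v \in S2 -> f v \notin S.
Proof.
move=> vS2; apply/negP => fvS.
have vS : v \in S by case/setDP: vS2.
by have := private_nbr_other (f_priv vS) fvS (f_neq_S2 vS2); rewrite cnbr_refl.
Qed.

Lemma f_inj_S2 : {in S2 &, injective f}.
Proof.
move=> v w /setDP[vS _] /setDP[wS _] fvw; apply/eqP/negPn/negP => vw.
have := private_nbr_other (f_priv vS) wS; rewrite eq_sym vw fvw => /(_ isT).
by case/andP: (f_priv wS) => ->.
Qed.

Lemma s_notin_S {v : V} : v \in S1 -> s v \notin S.
Proof.
rewrite inE => /andP[vS vpriv]; apply/negP => svS.
have svv : s v != v by apply/eqP => svv; have := s_adj v; rewrite svv e_irr.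
by have := private_nbr_other vpriv svS svv; rewrite /cnbr e_sym s_adj orbT.
Qed.

Lemma f_neq_s {w v : V} : w \in S2 -> v \in S1 -> f w != s v.
Proof.
move=> /setDP[wS wS1] vS1; have vS : v \in S by case/setIdP: vS1.
have vw : v != w by apply: contraNneq wS1 => <-.
apply: contraTneq (private_nbr_other (f_priv wS) vS vw) => ->.
by rewrite /cnbr s_adj orbT.
Qed.

Lemma card_witnesses : 2 * #|S| <= #|V|.
Proof.
have dis_S_f : [disjoint S & f @: S2].
  rewrite disjoint_sym disjoints_subset; apply/subsetP => _ /imsetP[v vS2 ->].
  by rewrite inE f_notin_S.
have dis_S_s : [disjoint S & s @: S1].
  rewrite disjoint_sym disjoints_subset; apply/subsetP => _ /imsetP[v vS1 ->].
  by rewrite inE s_notin_S.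
have dis_f_s : [disjoint f @: S2 & s @: S1].
  rewrite disjoints_subset; apply/subsetP => _ /imsetP[w wS2 ->].
  by rewrite inE; apply/imsetP => -[v vS1 /eqP]; rewrite (negPf (f_neq_s wS2 vS1)).
have cardS : #|S1| + #|S2| = #|S|.
  by rewrite -(cardsID S1 S) (setIidPr _) //; apply/subsetP => v /setIdP[].
have dis_Sf_s : [disjoint S :|: f @: S2 & s @: S1].
  by rewrite disjoint_sym disjoints_subset setCU subsetI -!disjoints_subset
    !(disjoint_sym (s @: S1)) dis_S_s dis_f_s.
have := max_card (S :|: f @: S2 :|: s @: S1).
rewrite !cardsU_disjoint // !card_in_imset; last 2 first.
- by move=> v w _ _; apply: s_inj.
- exact: f_inj_S2.
lia.
Qed.

End Witnesses.

Lemma irredundant_card (S : {set V}) : irredundant e S -> 2 * #|S| <= #|V|.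
Proof.
move=> /forallP Sirr.
apply: (@card_witnesses S (fun v => odflt v [pick u | private_nbr e S v u])) => v vS.
by case: pickP => [//|none]; have := Sirr v; rewrite vS => /existsP[u]; rewrite none.
Qed.

Lemma IR_half : 2 * IR e <= #|V|.
Proof.
rewrite mulnC -leq_divRL //; apply/bigmax_leqP => S Sirr.
by rewrite leq_divRL // mulnC irredundant_card.
Qed.

End IrredundantHalf.

Lemma ordS_neq n (x : 'I_n) : 1 < n -> ordS x != x.
Proof.
move=> n_gt1; apply/eqP => /(congr1 val) /=.
have := ltn_ord x; case: (ltngtP x.+1 n) => [xn _|//|xn _].
- by rewrite modn_small //; lia.
- by rewrite xn modnn; lia.
Qed.

Section CompleteMultipartiteProduct.
Variables (t : nat) (a b : nat -> nat).
Hypothesis t_gt0 : 0 < t.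
Hypothesis b_gt1 : forall i, i < t -> 1 < b i.

Local Notation G := (prodK_vertex t a b).

Definition shift_part (g : G) : G := [ffun i => (ordS (g i).1, (g i).2)].

Lemma prodK_adj_sym : symmetric (@prodK_adj t a b).
Proof. by move=> g h; apply/eq_forallb => i; rewrite eq_sym. Qed.

Lemma prodK_adj_irr : irreflexive (@prodK_adj t a b).
Proof. by move=> g; apply/negP => /forallP /(_ (Ordinal t_gt0)); rewrite eqxx. Qed.

Lemma shift_part_inj : injective shift_part.
Proof.
move=> g h gh; apply/ffunP => i; have := congr1 (fun k : G => k i) gh.
rewrite !ffunE => gh_i; have := ordS_inj (congr1 fst gh_i); have := congr1 snd gh_i.
by case: (g i) (h i) => [x y] [x' y'] /= -> ->.
Qed.

Lemma shift_part_adj g : prodK_adj g (shift_part g).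
Proof. by apply/forallP => i; rewrite ffunE eq_sym ordS_neq ?b_gt1. Qed.

Lemma card_prodK_vertex : #|G| = \prod_(i < t) (a i * b i).
Proof.
rewrite card_dep_ffun foldrE big_map big_enum /=.
by apply: eq_bigr => i _; rewrite card_prod !card_ord mulnC.
Qed.

End CompleteMultipartiteProduct.

Theorem theorem5p8 (t : nat) (a b : nat -> nat)
  (ht : 0 < t)
  (hb2 : forall i, i < t -> 2 <= b i)
  (hmono : forall i j, i <= j -> j < t -> b i <= b j) :
  (((IR (@prodK_adj t a b))%:R : rat)
    <= (b 0%N)%:R / (2 * b 0 - 1)%N%:R * \prod_(i < t) (a i * b i)%:R)%R.
Proof.
(* [hmono] is unused: the argument never compares the b i. *)
have IR_le : 2 * IR (@prodK_adj t a b) <= \prod_(i < t) (a i * b i).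
  rewrite -card_prodK_vertex; exact: (IR_half (@prodK_adj_sym t a b)
    (prodK_adj_irr ht) (@shift_part_inj t a b) (shift_part_adj hb2)).
have b0_gt1 := hb2 0 ht.
rewrite -natr_prod mulrAC ler_pdivlMr ?ltr0n; last by lia.
rewrite -!natrM ler_nat.
apply: leq_trans (leq_mul (leqnn _) (leq_subr 1 _)) _.
by rewrite mulnC mulnAC mulnC leq_mul2l IR_le orbT.
Qed.
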